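(* Let $d\geqslant1$ and let $u_1,\dots,u_d\in\mathbb{Z}^d$ satisfy no nontrivial $\mathbb{Z}$-linear relation. No periodic subset of $\mathbb{Z}^d$ with periods $u_1,\dots,u_d$ has a minimal complement in $\mathbb{Z}^d$.
   Context: $\mathbb{N}=\{0,1,2,\dots\}$, $P=\mathbb{N}u_1+\dots+\mathbb{N}u_d$. A nonempty $X\subseteq\mathbb{Z}^d$ is periodic with periods $u_1,\dots,u_d$ if $X\subseteq F+P$ for some nonempty finite $F\subseteq\mathbb{Z}^d$ and $x+P\subseteq X$ for every $x\in X$. A nonempty $M\subseteq\mathbb{Z}^d$ is a complement of $W$ if $M+W=\mathbb{Z}^d$, and a minimal complement if no proper subset of $M$ is a complement of $W$. *)

From mathcomp Require Import all_boot all_order all_algebra.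
Set Implicit Arguments. Unset Strict Implicit. Unset Printing Implicit Defensive.
Import Order.TTheory GRing.Theory Num.Theory.
Local Open Scope ring_scope.

Definition Zd (d : nat) := 'rV[int]_d.

Definition cone (d : nat) (u : 'I_d -> Zd d) (p : Zd d) : Prop :=
  exists n : 'I_d -> nat, p = \sum_(i < d) ((n i)%:Z *: u i).

Definition Z_independent (d : nat) (u : 'I_d -> Zd d) : Prop :=
  forall c : 'I_d -> int, \sum_(i < d) (c i *: u i) = 0 -> forall i, c i = 0.

Definition periodic (d : nat) (u : 'I_d -> Zd d) (X : Zd d -> Prop) : Prop :=
  [/\ (exists x, X x),
      (exists F : seq (Zd d), F != [::] /\
         forall x, X x -> exists f p, [/\ f \in F, cone u p & x = f + p])
    & forall x p, X x -> cone u p -> X (x + p)].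

Definition is_complement (d : nat) (M W : Zd d -> Prop) : Prop :=
  (exists m, M m) /\ forall z, exists m w, [/\ M m, W w & z = m + w].

Definition minimal_complement (d : nat) (M W : Zd d -> Prop) : Prop :=
  is_complement M W /\
  forall M' : Zd d -> Prop, (forall x, M' x -> M x) -> (exists x, M x /\ ~ M' x) ->
    ~ is_complement M' W.

From mathcomp Require Import all_boot all_order all_algebra.
From Stdlib Require Import Classical.
Set Implicit Arguments. Unset Strict Implicit. Unset Printing Implicit Defensive.
Import Order.TTheory GRing.Theory Num.Theory.
Local Open Scope ring_scope.

(* Fix an element m0 of a minimal complement M of X. Removing m0 destroys the
   covering, so some z0 is covered only through m0. If X + P is contained in X,
   then z0 - p is still covered, necessarily through m0, hence z0 - m0 - P lies
   in X. But a periodic X lies in F + P with F finite, and by independence of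
   the periods, z0 - m0 - k (u_1 + ... + u_d) lies in F + P only for boundedly
   many k. *)

Section MinimalComplement.

Variables (d : nat) (M X : Zd d -> Prop).

Lemma minimal_complement_private_point m0 :
  minimal_complement M X -> M m0 ->
  exists z0, forall m w, M m -> X w -> z0 = m + w -> m = m0.
Proof.
move=> [_ minM] Mm0.
pose M' x := M x /\ x <> m0.
have notM' : ~ is_complement M' X.
  apply: minM; first by move=> x [].
  by exists m0; split => // -[_]; apply.
have [z0 nz0] : exists z0, ~ exists m w, [/\ M' m, X w & z0 = m + w].
  apply: NNPP => all_covered; apply: notM'.
  have cov z : exists m w, [/\ M' m, X w & z = m + w].
    by apply: NNPP => nz; apply: all_covered; exists z.
  have [m [w [M'm _ _]]] := cov 0.
  by split => //; exists m.
exists z0 => m w Mm Xw z0E; apply: NNPP => mm0.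
by apply: nz0; exists m, w.
Qed.

Lemma minimal_complement_translate (S : Zd d -> Prop) :
  (forall x s, X x -> S s -> X (x + s)) -> minimal_complement M X ->
  exists x0, forall s, S s -> X (x0 - s).
Proof.
move=> XS minM; have [[[m0 Mm0] cov] _] := minM.
have [z0 z0_priv] := minimal_complement_private_point minM Mm0.
exists (z0 - m0) => s Ss.
have [m [w [Mm Xw zE]]] := cov (z0 - s).
have mm0 : m = m0.
  apply: (z0_priv m (w + s)) => //; first exact: XS.
  by rewrite addrA -zE subrK.
by have -> : z0 - m0 - s = w by rewrite addrAC zE mm0 addrC addKr.
Qed.

End MinimalComplement.

Lemma bounded_on_seq (T : eqType) (P : T -> nat -> Prop) :
  (forall f, exists B, forall k, P f k -> (k <= B)%N) ->
  forall F : seq T, exists B, forall f, f \in F -> forall k, P f k -> (k <= B)%N.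
Proof.
move=> bndP; elim=> [|f F [B IH]]; first by exists 0%N.
have [Bf Hf] := bndP f.
exists (maxn Bf B) => g; rewrite inE => /predU1P [-> | gF] k Pk.
  by rewrite leq_max (Hf k Pk).
by rewrite leq_max (IH g gF k Pk) orbT.
Qed.

Section IndependentPeriods.

Variables (d : nat) (u : 'I_d -> Zd d).
Hypothesis u_indep : Z_independent u.

Lemma Z_independent_coef_eq (a b : 'I_d -> int) :
  \sum_(i < d) (a i *: u i) = \sum_(i < d) (b i *: u i) -> a =1 b.
Proof.
move=> eq_ab i; apply/eqP; rewrite -subr_eq0; apply/eqP.
have diff0 : \sum_(j < d) ((a j - b j) *: u j) = 0.
  by under eq_bigr => j _ do rewrite scalerBl; rewrite sumrB eq_ab subrr.
exact: u_indep diff0 i.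
Qed.

Lemma cone_shift_bounded (i0 : 'I_d) (v : Zd d) :
  exists B, forall k, (exists2 q, cone u q & v = q + k%:Z *: \sum_(i < d) u i) ->
    (k <= B)%N.
Proof.
have coefE k (n : 'I_d -> nat) :
    \sum_(i < d) ((n i)%:Z *: u i) + k%:Z *: \sum_(i < d) u i
    = \sum_(i < d) ((n i + k)%N%:Z *: u i).
  by rewrite scaler_sumr -big_split /=; apply: eq_bigr => i _; rewrite PoszD scalerDl.
case: (classic (exists k q, cone u q /\ v = q + k%:Z *: \sum_(i < d) u i)).
- move=> [k0 [_ [[n0 ->] v0E]]].
  exists (n0 i0 + k0)%N => k [_ [n ->] vE].
  have coef_eq : (fun i => (n i + k)%N%:Z) =1 (fun i => (n0 i + k0)%N%:Z).
    by apply: Z_independent_coef_eq; rewrite -!coefE -vE -v0E.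
  by have [<-] := coef_eq i0; apply: leq_addl.
- by move=> none; exists 0%N => k [q Cq vE]; case: none; exists k, q.
Qed.

End IndependentPeriods.

Theorem corollary4p11 (d : nat) (hd : (1 <= d)%N) (u : 'I_d -> Zd d) :
  Z_independent u ->
  forall X : Zd d -> Prop, periodic u X -> ~ (exists M : Zd d -> Prop, minimal_complement M X).
Proof.
move=> u_indep X [_ [F [_ X_sub_FP]] XP] [M minM].
have [x0 x0_sub] := minimal_complement_translate XP minM.
have [B HB] := bounded_on_seq (fun f => cone_shift_bounded u_indep (Ordinal hd) (x0 - f)) F.
pose s := B.+1%:Z *: \sum_(i < d) u i.
have Cs : cone u s by exists (fun=> B.+1); rewrite /s scaler_sumr.
have [f [q [fF Cq x0E]]] := X_sub_FP _ (x0_sub s Cs).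
suff : (B.+1 <= B)%N by rewrite ltnn.
apply: (HB f fF); exists q => //.
by rewrite -[x0](subrK s) x0E addrC !addrA addNr add0r.
Qed.
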